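(* Let $A\in\mathfrak{B}_{n\times m}$ with $r(A)=\langle x_1,\dots,x_n\rangle$, suppose $x_1=2^s-1$ for some integer $0\le s\le m$, and suppose $\zeta_1(A)=n$ (i.e. all rows of $A$ equal the first row). Then $A$ is canonical.
   Context: $\mathfrak{B}_{n\times m}$ denotes the set of all $n\times m$ matrices with entries in $\{0,1\}$. For $A=[a_{ij}]\in\mathfrak{B}_{n\times m}$, $r(A)=\langle x_1,\dots,x_n\rangle$ with $x_i=\sum_{j=1}^m a_{ij}2^{m-j}$; tuples are compared lexicographically. $\zeta_1(A)$ is the number of indices $k$ with $x_k=x_1$. $A\sim B$ means $A=XBY$ for permutation matrices $X,Y$. $A$ is canonical if $r(A)$ is the lexicographically minimal element of $\{r(B)\mid B\sim A\}$. *)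

From mathcomp Require Import all_boot all_order all_fingroup all_algebra.
Set Implicit Arguments. Unset Strict Implicit. Unset Printing Implicit Defensive.

Definition bmatrix (n m : nat) := 'M[bool]_(n, m).

(* x_i = sum_{j=1}^m a_ij 2^(m-j); with 0-indexed columns j : 'I_m this is 2^(m-1-j). *)
Definition row_val (n m : nat) (A : bmatrix n m) (i : 'I_n) : nat :=
  \sum_(j < m) (A i j : nat) * 2 ^ (m - j.+1).

Definition rA (n m : nat) (A : bmatrix n m) : seq nat :=
  [seq row_val A i | i <- enum 'I_n].

Fixpoint lex_le (s t : seq nat) : bool :=
  match s, t with
  | [::], _ => true
  | _ :: _, [::] => false
  | x :: s', y :: t' => (x < y) || ((x == y) && lex_le s' t')
  end.

Definition zeta1 (n m : nat) (hn : 0 < n) (A : bmatrix n m) : nat :=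
  #|[set k : 'I_n | row_val A k == row_val A (Ordinal hn)]|.

(* A ~ B iff A = X B Y with X, Y permutation matrices, i.e. A is obtained
   from B by permuting rows and columns. *)
Definition bequiv (n m : nat) (A B : bmatrix n m) : Prop :=
  exists (s : 'S_n) (t : 'S_m), A = (\matrix_(i, j) B (s i) (t j))%R.

Definition canonical (n m : nat) (A : bmatrix n m) : Prop :=
  forall B : bmatrix n m, bequiv B A -> lex_le (rA A) (rA B).

(** A row of value [2^s - 1] with [s <= m] is the binary word [0...01...1]
    with exactly [s] ones.  Permuting columns keeps the number of ones, and a
    word with [s] ones has value at least [2^s - 1], reached when the ones
    occupy the [s] lowest positions.  Permuting rows as well, every row of a
    matrix equivalent to [A] is thus at least [2^s - 1], which is every entry
    of [r(A)]; so [r(A)] is lexicographically minimal. *)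

From mathcomp Require Import all_boot all_order all_fingroup all_algebra.
From mathcomp Require Import zify.

Set Implicit Arguments.
Unset Strict Implicit.
Unset Printing Implicit Defensive.

Definition binval {m} (f : 'I_m -> bool) : nat := \sum_(j < m) (f j : nat) * 2 ^ (m - j.+1).

Definition bitcount {m} (f : 'I_m -> bool) : nat := \sum_(j < m) (f j : nat).

Lemma binvalS m (f : 'I_m.+1 -> bool) :
  binval f = (f ord0 : nat) * 2 ^ m + binval (f \o lift ord0 : 'I_m -> bool).
Proof. by rewrite /binval big_ord_recl subn1. Qed.

Lemma bitcountS m (f : 'I_m.+1 -> bool) :
  bitcount f = (f ord0 : nat) + bitcount (f \o lift ord0 : 'I_m -> bool).
Proof. by rewrite /bitcount big_ord_recl. Qed.

Lemma binval_ltn m (f : 'I_m -> bool) : binval f < 2 ^ m.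
Proof.
elim: m f => [|m IHm] f; first by rewrite /binval big_ord0.
by rewrite binvalS expnS; have := IHm (f \o lift ord0); case: (f ord0) => /=; lia.
Qed.

Lemma bitcount_leq m (f : 'I_m -> bool) : bitcount f <= m.
Proof.
elim: m f => [|m IHm] f; first by rewrite /bitcount big_ord0.
by rewrite bitcountS; have := IHm (f \o lift ord0); case: (f ord0) => /=; lia.
Qed.

Lemma bitcount_perm m (f : 'I_m -> bool) (t : 'S_m) : bitcount (f \o t) = bitcount f.
Proof. by rewrite /bitcount [RHS](reindex_inj (@perm_inj _ t)). Qed.

Lemma binval_geq_bitcount m (f : 'I_m -> bool) : 2 ^ bitcount f - 1 <= binval f.
Proof.
elim: m f => [|m IHm] f; first by rewrite /binval /bitcount !big_ord0.
rewrite binvalS bitcountS; have := IHm (f \o lift ord0).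
have : 2 ^ bitcount (f \o lift ord0 : 'I_m -> bool) <= 2 ^ m by rewrite leq_exp2l ?bitcount_leq.
have := expn_gt0 2 (bitcount (f \o lift ord0 : 'I_m -> bool)).
by case: (f ord0) => /=; rewrite ?add0n ?add1n ?expnS; lia.
Qed.

Lemma bitcount_binval_mask m (f : 'I_m -> bool) s :
  s <= m -> binval f = 2 ^ s - 1 -> bitcount f = s.
Proof.
elim: m f s => [|m IHm] f s.
  by rewrite leqn0 => /eqP -> _; rewrite /bitcount big_ord0.
rewrite binvalS bitcountS leq_eqVlt ltnS => /orP[/eqP-> | le_sm] val_f.
- have val_tail : binval (f \o lift ord0) = 2 ^ m - 1.
    have := binval_ltn (f \o lift ord0); have := expn_gt0 2 m.
    by move: val_f; rewrite expnS; case: (f ord0) => /=; lia.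
  have f0 : f ord0 by move: val_f; rewrite val_tail expnS; case: (f ord0) => /=; lia.
  by rewrite f0 (IHm _ m).
- have : 2 ^ s <= 2 ^ m by rewrite leq_exp2l.
  have := expn_gt0 2 s.
  move: val_f; case: (f ord0) => /= val_f *; first lia.
  by rewrite (IHm _ s) //; lia.
Qed.

Lemma lex_le_nseq x k (t : seq nat) :
  size t = k -> all (leq x) t -> lex_le (nseq k x) t.
Proof.
elim: t k => [|y t IHt] [|k] //= [size_t] /andP[le_xy le_xt].
by case: ltngtP le_xy => // _ _; rewrite IHt.
Qed.

Lemma rA_const n m (A : bmatrix n m) x :
  (forall i, row_val A i = x) -> rA A = nseq n x.
Proof.
move=> row_x; rewrite /rA (eq_map row_x).
by rewrite -[in RHS](size_enum_ord n); elim: (enum 'I_n) => //= ? ? ->.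
Qed.

Lemma zeta1_full_row_val n m (hn : 0 < n) (A : bmatrix n m) :
  zeta1 hn A = n -> forall i, row_val A i = row_val A (Ordinal hn).
Proof.
move=> zeta_n i; apply/eqP.
have full : [set k | row_val A k == row_val A (Ordinal hn)] = [set: 'I_n].
  by apply/eqP; rewrite eqEcard subsetT cardsT card_ord -[X in X <= _]zeta_n leqnn.
by move/setP/(_ i): full; rewrite !inE.
Qed.

Lemma canonical_of_row_val_min n m (A : bmatrix n m) x :
  (forall i, row_val A i = x) ->
  (forall B, bequiv B A -> forall i, x <= row_val B i) ->
  canonical A.
Proof.
move=> row_x B_ge B eqBA; rewrite (rA_const row_x).
apply: lex_le_nseq; first by rewrite size_map size_enum_ord.
by apply/allP => _ /mapP[i _ ->]; apply: B_ge.
Qed.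

Theorem proposition7 (n m : nat) (hn : 0 < n) (A : bmatrix n m) (s : nat) :
  s <= m ->
  row_val A (Ordinal hn) = 2 ^ s - 1 ->
  zeta1 hn A = n ->
  canonical A.
Proof.
move=> le_sm row1 zeta_n.
have row_mask i : row_val A i = 2 ^ s - 1 by rewrite (zeta1_full_row_val zeta_n).
apply: (canonical_of_row_val_min row_mask) => _ [sg [t ->]] i.
have -> : row_val (\matrix_(i, j) A (sg i) (t j))%R i = binval (A (sg i) \o t).
  by apply: eq_bigr => j _; rewrite mxE.
have count_s : bitcount (A (sg i)) = s by apply: bitcount_binval_mask => //; apply: row_mask.
by rewrite -count_s -(bitcount_perm _ t) binval_geq_bitcount.
Qed.
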